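(* Let $d\ge 2$ and let $P$ be a 2-dimensional 0-1 matrix of dimensions $r\times s$. Let $P_d$ be the $d$-dimensional 0-1 matrix of dimensions $r\times s\times 1\times\cdots\times 1$ whose entry $(i,j,1,\dots,1)$ is $1$ if and only if entry $(i,j)$ of $P$ is $1$. Then for all $n$, $\operatorname{sat}(n,P_d,d)=n^{d-2}\operatorname{sat}(n,P)$.
   Context: A $d$-dimensional 0-1 matrix $A$ contains a $d$-dimensional 0-1 matrix $P$ if some submatrix of $A$ (obtained by selecting, in each of the $d$ dimensions, a subset of indices, keeping their order) is equal to $P$ or can be turned into $P$ by changing some ones to zeroes; otherwise $A$ avoids $P$. $A$ is saturating for $P$ if $A$ avoids $P$ but changing any zero of $A$ to a one creates a copy of $P$. $\operatorname{sat}(n,P,d)$ is the minimum number of ones in a $d$-dimensional 0-1 matrix of dimensions $n\times\cdots\times n$ that is saturating for $P$; $\operatorname{sat}(n,P)$ denotes the case $d=2$, i.e. the minimum number of ones in an $n\times n$ 0-1 matrix saturating for $P$. *)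

From mathcomp Require Import all_boot.
Set Implicit Arguments. Unset Strict Implicit. Unset Printing Implicit Defensive.

(* Positions of a d-dimensional matrix of dimensions dm 0 x ... x dm (d-1);
   indices are 0-based. *)
Definition pos (d : nat) (dm : 'I_d -> nat) : finType :=
  {dffun forall k : 'I_d, 'I_(dm k)}.

Definition dmat (d : nat) (dm : 'I_d -> nat) : finType := {ffun pos dm -> bool}.

Definition cube (d n : nat) : 'I_d -> nat := fun _ => n.
Arguments cube : clear implicits.

Definition ddims (d r s : nat) : 'I_d -> nat :=
  fun k => if val k == 0 then r else if val k == 1 then s else 1.
Arguments ddims : clear implicits.

Definition incr (m n : nat) (f : {ffun 'I_m -> 'I_n}) : bool :=
  [forall i : 'I_m, forall j : 'I_m, (i < j) ==> (f i < f j)].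

Definition contains (d : nat) (dmP dmA : 'I_d -> nat)
    (P : dmat dmP) (A : dmat dmA) : bool :=
  [exists F : {dffun forall k : 'I_d, {ffun 'I_(dmP k) -> 'I_(dmA k)}},
     [forall k : 'I_d, incr (F k)] &&
     [forall x : pos dmP,
        P x ==> A (finfun (fun k : 'I_d => F k (x k)) : pos dmA)]].

Definition avoids d dmP dmA (P : dmat dmP) (A : dmat dmA) : bool :=
  ~~ @contains d dmP dmA P A.

Definition setone d dm (A : @dmat d dm) (x : pos dm) : dmat dm :=
  [ffun y => (y == x) || A y].

Definition saturating d dmP dmA (P : dmat dmP) (A : dmat dmA) : bool :=
  @avoids d dmP dmA P A &&
  [forall x : pos dmA, ~~ A x ==> contains P (setone A x)].

Definition ones d dm (A : @dmat d dm) : nat := #|[pred x | A x]|.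

(* sat(n,P,d): minimum number of ones of an n x ... x n d-dimensional matrix
   saturating for P (convention: 0 if no saturating matrix exists). *)
Definition sat (d : nat) (dmP : 'I_d -> nat) (n : nat) (P : dmat dmP) : nat :=
  match [pick A : dmat (cube d n) | saturating P A] with
  | Some A0 => \big[minn/ones A0]_(A : dmat (cube d n) | saturating P A) ones A
  | None => 0
  end.

Definition lift_mat (d r s : nat) (P : dmat (ddims 2 r s)) : dmat (ddims d r s) :=
  [ffun x : pos (ddims d r s) =>
     [exists y : pos (ddims 2 r s),
        P y && [forall k : 'I_d,
          val (x k) == (if val k == 0 then val (y ord0)
                        else if val k == 1 then val (y ord_max) else 0)]]].

From mathcomp Require Import all_boot order.
Import Order.TTheory.

(* Split a position of the d-dimensional n-cube into its first two coordinates
   and the remaining d - 2, so that a matrix A becomes a family of n^(d-2)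
   two-dimensional slices.  As P_d is flat in the last d - 2 directions, A
   contains P_d iff some slice contains P, and turning a zero of A into a one
   changes a single slice.  Hence A is saturating for P_d iff every slice is
   saturating for P; since ones add up over slices, stacking n^(d-2) copies of
   a minimum saturating matrix for P is a minimum saturating matrix for P_d. *)

Section SatCharacterization.
Context {d : nat} {dmP : 'I_d -> nat} {n : nat} {P : dmat dmP}.

Lemma sat_no_saturating :
  (forall A : dmat (cube d n), ~~ saturating P A) -> sat n P = 0.
Proof.
by move=> none; rewrite /sat; case: pickP => // A0; rewrite (negbTE (none A0)).
Qed.

Lemma sat_minimal (A : dmat (cube d n)) :
  saturating P A ->
  (forall B : dmat (cube d n), saturating P B -> ones A <= ones B) ->
  sat n P = ones A.
Proof.
move=> satA minA; rewrite /sat; case: pickP => [A0 satA0|/(_ A)]; last by rewrite satA.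
rewrite -minEnat; apply/eqP; rewrite eq_le (bigmin_le_cond _ _ satA) /=.
by apply/bigmin_geP; split; [exact: minA satA0 | exact: minA].
Qed.

End SatCharacterization.

Lemma ones_sum d (dm : 'I_d -> nat) (A : dmat dm) : ones A = \sum_x A x.
Proof. by rewrite /ones -sum1_card big_mkcond. Qed.

Lemma sat_empty_cube k (dm : 'I_k.+1 -> nat) (Q : dmat dm) : sat 0 Q = 0.
Proof.
have ones0 (A : dmat (cube k.+1 0)) : ones A = 0.
  by apply: eq_card0 => x; case: (x ord0).
case: (pickP [pred A : dmat (cube k.+1 0) | saturating Q A]) => [A satA|none].
  by rewrite (sat_minimal _ satA) ?ones0.
by apply: sat_no_saturating => A; apply/negbT/none.
Qed.

Section Slices.
Context {m n : nat}.
Local Notation D := m.+2.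
Local Notation tail_pos := {ffun 'I_m -> 'I_n}.

Definition pos_head (x : pos (cube D n)) : pos (cube 2 n) :=
  finfun (fun a : 'I_2 => x (lshift m a) : 'I_n).

Definition pos_tail (x : pos (cube D n)) : tail_pos := [ffun b => x (rshift 2 b)].

Definition pos_join (y : pos (cube 2 n)) (z : tail_pos) : pos (cube D n) :=
  finfun (fun k : 'I_D =>
    match @split 2 m k with inl a => y a : 'I_n | inr b => z b end).

Lemma pos_head_join y z : pos_head (pos_join y z) = y.
Proof. by apply/ffunP => a; rewrite !ffunE (unsplitK (inl a)). Qed.

Lemma pos_tail_join y z : pos_tail (pos_join y z) = z.
Proof. by apply/ffunP => b; rewrite !ffunE (unsplitK (inr b)). Qed.

Lemma pos_joinK x : pos_join (pos_head x) (pos_tail x) = x.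
Proof.
by apply/ffunP => k; rewrite ffunE; case: split_ordP => [a|b] ->; rewrite ffunE.
Qed.

Lemma eq_pos_join y z y' z' :
  (pos_join y z == pos_join y' z') = (y == y') && (z == z').
Proof.
apply/idP/idP => [/eqP E | /andP [/eqP-> /eqP->] //].
move: (congr1 pos_head E) (congr1 pos_tail E).
by rewrite !pos_head_join !pos_tail_join => -> ->; rewrite !eqxx.
Qed.

Definition slice (A : dmat (cube D n)) (z : tail_pos) : dmat (cube 2 n) :=
  [ffun y => A (pos_join y z)].

Definition stack (B : tail_pos -> dmat (cube 2 n)) : dmat (cube D n) :=
  [ffun x => B (pos_tail x) (pos_head x)].

Lemma slice_stack B z : slice (stack B) z = B z.
Proof. by apply/ffunP => y; rewrite !ffunE pos_head_join pos_tail_join. Qed.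

Lemma ones_slices A : ones A = \sum_(z : tail_pos) ones (slice A z).
Proof.
rewrite ones_sum (reindex (fun p => pos_join p.1 p.2)) /=; last first.
  exists (fun x => (pos_head x, pos_tail x)) => [[y z] _ | x _] /=.
    by rewrite pos_head_join pos_tail_join.
  exact: pos_joinK.
rewrite -(pair_big xpredT xpredT (fun y z => A (pos_join y z) : nat)) exchange_big.
by apply: eq_bigr => z _; rewrite ones_sum; apply: eq_bigr => y _; rewrite ffunE.
Qed.

Lemma ones_stack B : ones (stack B) = \sum_(z : tail_pos) ones (B z).
Proof. by rewrite ones_slices; apply: eq_bigr => z _; rewrite slice_stack. Qed.

Lemma slice_setone A x z :
  slice (setone A x) z =
  if pos_tail x == z then setone (slice A z) (pos_head x) else slice A z.
Proof.
apply/ffunP => y; rewrite !ffunE -{1}(pos_joinK x) eq_pos_join.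
by case: (eqVneq (pos_tail x) z) => [<-|_]; rewrite ?andbT ?andbF !ffunE.
Qed.

End Slices.

Section Lift.
Context {m n r s : nat} {P : dmat (ddims 2 r s)}.
Local Notation D := m.+2.

Definition lift_coord (y : pos (ddims 2 r s)) (t : nat) : nat :=
  if t == 0 then val (y ord0) else if t == 1 then val (y ord_max) else 0.

Lemma lift_matE x :
  lift_mat D P x = [exists y, P y && [forall k : 'I_D, val (x k) == lift_coord y k]].
Proof. by rewrite ffunE. Qed.

Lemma lift_coord_lt y (k : 'I_D) : lift_coord y k < ddims D r s k.
Proof. by rewrite /lift_coord /ddims; do 2?case: ifP => _ //; exact: ltn_ord. Qed.

Lemma lift_coord_head y (a : 'I_2) : lift_coord y a = y a.
Proof.
by case: a => [[|[|t]] lt_a] //;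
  rewrite /lift_coord /=; congr (val (y _)); exact: val_inj.
Qed.

Definition lift_pos y : pos (ddims D r s) :=
  finfun (fun k => Ordinal (lift_coord_lt y k)).

Lemma lift_mat_lift_pos y : P y -> lift_mat D P (lift_pos y).
Proof.
move=> Py; rewrite lift_matE; apply/existsP; exists y.
by rewrite Py; apply/forallP => k; rewrite ffunE.
Qed.

Lemma contains_lift_slice (A : dmat (cube D n)) :
  contains (lift_mat D P) A -> exists z, contains P (slice A z).
Proof.
case/existsP => F /andP [/forallP incrF /forallP onesF].
set z := [ffun b => F (rshift 2 b) ord0].
pose G := finfun (fun a : 'I_2 =>
  F (lshift m a) : {ffun 'I_(ddims 2 r s a) -> 'I_(cube 2 n a)}).
exists z; apply/existsP; exists G; apply/andP; split.
  by apply/forallP => a; rewrite ffunE; exact: (incrF (lshift m a)).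
apply/forallP => y; apply/implyP => /lift_mat_lift_pos /(implyP (onesF _)).
suff -> : finfun (fun k => F k (lift_pos y k))
          = pos_join (finfun (fun a => G a (y a))) z :> pos (cube D n).
  by rewrite ffunE.
apply/ffunP => k; rewrite !ffunE.
case: split_ordP => [a|b] ->; rewrite !ffunE; congr (F _ _); apply: val_inj => //=.
exact: lift_coord_head.
Qed.

(* The columns selected by [G a] are read through [nth] because the index [i]
   only gets the type ['I_(ddims 2 r s a)] after case analysis on [k]; the
   default [o] is never reached. *)
Lemma slice_contains_lift (o : 'I_n) (A : dmat (cube D n)) z :
  contains P (slice A z) -> contains (lift_mat D P) A.
Proof.
case/existsP => G /andP [/forallP incrG /forallP onesG].
pose F := finfun (fun k : 'I_D => [ffun i : 'I_(ddims D r s k) =>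
  match @split 2 m k with inl a => nth o (fgraph (G a)) i | inr b => z b end]
  : {ffun 'I_(ddims D r s k) -> 'I_(cube D n k)}).
apply/existsP; exists F; apply/andP; split.
  apply/forallP => k; rewrite ffunE.
  apply/forallP => i; apply/forallP => j; apply/implyP.
  move: i j; case: split_ordP => [a|b] -> i j; rewrite !ffunE.
    by rewrite !nth_fgraph_ord; exact: (implyP (forallP (forallP (incrG a) i) j)).
  by case: i j => [[|//] ?] [[|//] ?].
apply/forallP => x; apply/implyP.
rewrite lift_matE => /existsP [y /andP [Py /forallP xE]].
move: (implyP (onesG y) Py); rewrite ffunE.
suff -> : [ffun k => F k (x k)] = pos_join (finfun (fun a => G a (y a))) z by [].
apply/ffunP => k; rewrite !ffunE; move: (xE k).
case: split_ordP => [a|b] -> xkE //.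
by rewrite (eqP xkE) lift_coord_head nth_fgraph_ord ffunE.
Qed.

Lemma avoids_lift (o : 'I_n) (A : dmat (cube D n)) :
  avoids (lift_mat D P) A = [forall z, avoids P (slice A z)].
Proof.
apply/idP/forallP => [liftfree z | slicefree].
  by apply: contra liftfree; exact: slice_contains_lift.
by apply/negP => /contains_lift_slice [z]; exact/negP/slicefree.
Qed.

Lemma saturating_lift (o : 'I_n) (A : dmat (cube D n)) :
  saturating (lift_mat D P) A = [forall z, saturating P (slice A z)].
Proof.
rewrite /saturating (avoids_lift o).
apply/andP/forallP => [[/forallP freeA /forallP satA] z | satA].
  rewrite freeA; apply/forallP => y; apply/implyP => Ay0.
  have /contains_lift_slice [z' Pz'] : contains (lift_mat D P) (setone A (pos_join y z)).
    by apply: (implyP (satA _)); rewrite ffunE in Ay0.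
  move: Pz'; rewrite slice_setone pos_tail_join pos_head_join.
  by case: eqP => [<- // | _ Pz']; move: (freeA z'); rewrite /avoids Pz'.
split; first by apply/forallP => z; case/andP: (satA z).
apply/forallP => x; apply/implyP => Ax0.
apply: (slice_contains_lift o _ (pos_tail x)); rewrite slice_setone eqxx.
case/andP: (satA (pos_tail x)) => _ /forallP /(_ (pos_head x)) /implyP; apply.
by rewrite ffunE pos_joinK.
Qed.

End Lift.

Theorem lemma4 (d r s : nat) (P : dmat (ddims 2 r s)) :
  2 <= d ->
  forall n : nat,
    sat n (lift_mat d P) = n ^ (d - 2) * sat n P.
Proof.
case: d => [|[|m]] // _ n; rewrite !subSS subn0.
case: n => [|n]; first by rewrite !sat_empty_cube muln0.
have o : 'I_n.+1 := ord0.
have [B0 satB0|none] := pickP [pred B : dmat (cube 2 n.+1) | saturating P B];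
  last first.
  have nosat (B : dmat (cube 2 n.+1)) : ~~ saturating P B by apply/negbT/none.
  rewrite (sat_no_saturating nosat) muln0; apply: sat_no_saturating => A.
  by rewrite (saturating_lift o) negb_forall; apply/existsP; exists [ffun=> o].
case: (arg_minP (fun B => ones B) satB0) => B satB minB.
rewrite (sat_minimal _ satB minB).
have -> : n.+1 ^ m * ones B = ones (stack (fun _ : {ffun 'I_m -> 'I_n.+1} => B)).
  by rewrite ones_stack sum_nat_const card_ffun !card_ord.
apply: sat_minimal => [|A]; rewrite (saturating_lift o).
  by apply/forallP => z; rewrite slice_stack.
move=> /forallP satA; rewrite ones_stack (ones_slices A).
by apply: leq_sum => z _; exact: minB (satA z).
Qed.
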